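(* Let $k\in\mathbb{Z}_+$ and let $a\in L_1(\mathbb{R}_+)$ be such that $\gamma_{a,k}\in L_\infty(\mathbb{R}_+)$, where $\gamma_{a,k}(\xi)=2\xi\int_{\mathbb{R}_+}a(v)\,\ell_k^2(2v\xi)\,\mathrm{d}v$, $\xi>0$. Then for each $n=1,2,\dots$, $$\lim_{\xi\to+\infty}\frac{\mathrm{d}^n\gamma_{a,k}(\xi)}{\mathrm{d}\xi^n}=0.$$
   Context: $\mathbb{R}_+=(0,\infty)$, $\mathbb{Z}_+=\{0,1,2,\dots\}$. $L_k(x)=\sum_{i=0}^k(-1)^i\binom{k}{i}\frac{x^i}{i!}$ is the Laguerre polynomial of degree $k$ and $\ell_k(x)=e^{-x/2}L_k(x)$. *)

From HB Require Import structures.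
From mathcomp Require Import all_boot all_order all_algebra.
From mathcomp Require Import all_classical all_reals all_analysis.
Set Implicit Arguments. Unset Strict Implicit. Unset Printing Implicit Defensive.
Import Order.TTheory GRing.Theory Num.Theory.
Import numFieldNormedType.Exports.
Local Open Scope classical_set_scope.
Local Open Scope ring_scope.

Definition laguerre {R : realType} (k : nat) (x : R) : R :=
  \sum_(0 <= i < k.+1) ((-1) ^+ i * ('C(k, i))%:R * x ^+ i / (i`!)%:R).

Definition laguerre_fun {R : realType} (k : nat) (x : R) : R :=
  expR (- x / 2) * laguerre k x.

Definition gamma_ak {R : realType} (a : R -> R) (k : nat) (xi : R) : R :=
  2 * xi * Rintegral (@lebesgue_measure R) `]0, +oo[%classic
    (fun v => a v * (laguerre_fun k (2 * v * xi)) ^+ 2).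

From HB Require Import structures.
From mathcomp Require Import all_boot all_order all_algebra.
From mathcomp Require Import all_classical all_reals all_analysis.
From mathcomp Require Import ring lra measurable_realfun lebesgue_integral_under.
Import Order.TTheory GRing.Theory Num.Theory.
Import numFieldNormedType.Exports.
Local Open Scope classical_set_scope.
Local Open Scope ring_scope.

(* Expanding the square of the Laguerre function writes gamma_{a,k}(xi), for
   xi > 0, as a finite combination of terms c xi^m H_j(xi) with m <= j + 1,
   where H_j(xi) = int_0^oo a(v) (2v)^j e^{-2 v xi} dv.  Differentiating under
   the integral gives H_j' = - H_{j+1}, so the derivative of such a combination
   is again one, now with m <= j.  Finally xi^m H_j(xi) -> 0 for m <= j by
   dominated convergence, since (2 v xi)^j e^{-2 v xi} is bounded by j! and
   tends to 0 pointwise. *)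

Section exp_kernel.
Context {R : realType}.

Lemma exprn_le_fact_expR (x : R) (j : nat) : 0 <= x -> x ^+ j <= j`!%:R * expR x.
Proof.
move=> x0; case: j => [|j]; first by rewrite expr0 fact0 mul1r -expR0 ler_expR.
have : x ^+ j.+1 / j.+1`!%:R <= expR x.
  by apply: le_trans (expR_ge1Dxn j x0); rewrite lerDr.
by rewrite ler_pdivrMr ?ltr0n ?fact_gt0 // mulrC.
Qed.

Definition powexpN (j : nat) (x : R) := x ^+ j * expR (- x).

Lemma powexpN_le_fact (j : nat) (x : R) : 0 <= x -> powexpN j x <= j`!%:R.
Proof.
by move=> x0; rewrite /powexpN expRN ler_pdivrMr ?expR_gt0 ?exprn_le_fact_expR.
Qed.

Lemma powexpN_le_inv (j : nat) (x : R) : 0 < x -> powexpN j x <= j.+1`!%:R / x.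
Proof.
move=> x0; rewrite ler_pdivlMr //.
have -> : powexpN j x * x = powexpN j.+1 x by rewrite /powexpN exprSr mulrAC.
exact/powexpN_le_fact/ltW.
Qed.

Definition exp_kernel (j : nat) (xi v : R) := (2 * v) ^+ j * expR (- (2 * v * xi)).

Lemma exp_kernel_ge0 (j : nat) (xi v : R) : 0 <= v -> 0 <= exp_kernel j xi v.
Proof. by move=> v0; rewrite mulr_ge0 ?exprn_ge0 ?expR_ge0 ?mulr_ge0. Qed.

Lemma exprn_mul_exp_kernel (j : nat) (xi v : R) :
  xi ^+ j * exp_kernel j xi v = powexpN j (2 * v * xi).
Proof. by rewrite /exp_kernel /powexpN [in RHS]exprMn mulrCA mulrA. Qed.

Lemma exp_kernel_le (j : nat) (xi v : R) : 0 < xi -> 0 <= v ->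
  exp_kernel j xi v <= j`!%:R / xi ^+ j.
Proof.
move=> xi0 v0; rewrite ler_pdivlMr ?exprn_gt0 // mulrC exprn_mul_exp_kernel.
by apply: powexpN_le_fact; rewrite !mulr_ge0 // ltW.
Qed.

Lemma exp_kernel_nonincr (j : nat) {v xi1 xi2 : R} : 0 <= v -> xi1 <= xi2 ->
  exp_kernel j xi2 v <= exp_kernel j xi1 v.
Proof.
move=> v0 le12; rewrite ler_wpM2l ?exprn_ge0 ?mulr_ge0 // ler_expR lerN2.
by rewrite ler_wpM2l // mulr_ge0.
Qed.

Lemma measurable_exp_kernel (j : nat) (xi : R) : measurable_fun setT (exp_kernel j xi).
Proof.
apply: measurable_funM; first by apply/measurable_funX/measurable_funM.
apply: measurableT_comp; first exact: measurable_expR.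
by apply: measurableT_comp => //; apply/measurable_funM => //; exact: measurable_funM.
Qed.

Lemma is_derive_exp_kernel (j : nat) (xi v : R) :
  is_derive xi 1 (exp_kernel j ^~ v) (- exp_kernel j.+1 xi v).
Proof.
have -> : exp_kernel j ^~ v = (2 * v) ^+ j \*: (expR \o (- (2 * v)) \*: id).
  by apply/funext => x; rewrite /exp_kernel /= /GRing.scale /= mulNr.
have dE : is_derive xi 1 (expR \o (- (2 * v)) \*: id)
    (expR ((- (2 * v)) *: xi) * ((- (2 * v)) *: 1)) by apply: is_derive1_comp.
apply: is_derive_eq.
rewrite /exp_kernel /GRing.scale /= exprS mulNr.
set p := _ ^+ j; set E := expR _; ring.
Qed.

Lemma exprn_exp_kernel_ge0 (m j : nat) (x v : R) : 0 <= x -> 0 <= v ->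
  0 <= x ^+ m * exp_kernel j x v.
Proof. by move=> x0 v0; rewrite mulr_ge0 ?exprn_ge0 ?exp_kernel_ge0. Qed.

Lemma exprn_exp_kernel_le_fact (m j : nat) (x v : R) :
  (m <= j)%N -> 1 <= x -> 0 <= v ->
  x ^+ m * exp_kernel j x v <= j`!%:R.
Proof.
move=> mj x1 v0; apply: le_trans (_ : x ^+ j * exp_kernel j x v <= _).
  by rewrite ler_wpM2r ?exp_kernel_ge0 ?ler_weXn2l.
rewrite exprn_mul_exp_kernel; apply: powexpN_le_fact.
by rewrite !mulr_ge0 // (le_trans ler01).
Qed.

Lemma exprn_exp_kernel_le_inv (m j : nat) (x v : R) :
  (m <= j)%N -> 1 <= x -> 0 < v ->
  x ^+ m * exp_kernel j x v <= (j.+1`!%:R / (2 * v)) / x.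
Proof.
move=> mj x1 v0; have x0 : 0 < x by rewrite (lt_le_trans ltr01).
apply: le_trans (_ : x ^+ j * exp_kernel j x v <= _).
  by rewrite ler_wpM2r ?exp_kernel_ge0 ?ler_weXn2l // ltW.
rewrite exprn_mul_exp_kernel -[_ / _ / x]mulrA -invfM.
by apply: powexpN_le_inv; rewrite !mulr_gt0.
Qed.

Lemma invr_cvgy0 : (x^-1 : R) @[x --> +oo] --> (0 : R).
Proof. by apply: (@gtr0_cvgV0 R R _ _ id (nbhs_pinfty_gt (@real0 R))).2 cvg_id. Qed.

Lemma exprn_exp_kernel_cvg0 (m j : nat) (v : R) : (m <= j)%N -> 0 < v ->
  x ^+ m * exp_kernel j x v @[x --> +oo] --> (0 : R).
Proof.
move=> mj v0; set C := j.+1`!%:R / (2 * v).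
apply: (@squeeze_cvgr _ _ _ _ (cst 0) (fun x => C / x)).
- near=> x; have x1 : 1 <= x by near: x; exact: nbhs_pinfty_ge.
  rewrite /= exprn_exp_kernel_ge0 ?(le_trans ler01 x1) ?(ltW v0) //=.
  exact: exprn_exp_kernel_le_inv.
- exact: cvg_cst.
- by rewrite -(mulr0 C); apply: cvgM; [exact: cvg_cst | exact: invr_cvgy0].
Unshelve. all: by end_near.
Qed.

Definition laguerre_coef (k i : nat) : R := (-1) ^+ i * 'C(k, i)%:R / i`!%:R.

Lemma laguerre_fun_sqr (k : nat) (xi v : R) :
  let r := index_iota 0 k.+1 in
  laguerre_fun k (2 * v * xi) ^+ 2 = \sum_(p <- [seq (i1, i2) | i1 <- r, i2 <- r])
    laguerre_coef k p.1 * laguerre_coef k p.2 * xi ^+ (p.1 + p.2)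
      * exp_kernel (p.1 + p.2) xi v.
Proof.
move=> r; set y := 2 * v * xi.
have L : laguerre k y = \sum_(i <- r) laguerre_coef k i * y ^+ i.
  by apply: eq_bigr => i _; rewrite /laguerre_coef mulrAC.
have -> : laguerre_fun k y ^+ 2 = expR (- y) * (laguerre k y * laguerre k y).
  rewrite /laguerre_fun exprMn -expRM_natl -expr2.
  by congr (expR _ * _); lra.
rewrite L mulr_suml mulr_sumr big_allpairs; apply: eq_bigr => i1 _.
rewrite mulr_sumr mulr_sumr; apply: eq_bigr => i2 _.
rewrite /exp_kernel /y !exprD !exprMn.
set E := expR _; set c1 := laguerre_coef k i1; set c2 := laguerre_coef k i2.
ring.
Qed.

End exp_kernel.

Section kernel_transform.
Context {R : realType}.
Local Notation mu := (@lebesgue_measure R).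
Local Notation Rpos := (`]0%R, +oo[%classic : set (measurableTypeR R)).

Variable a : R -> R.
Hypothesis ia : mu.-integrable Rpos (EFin \o a).

Let mRpos : measurable Rpos. Proof. exact: measurable_itv. Qed.

Let Rpos_gt0 (v : R) : Rpos v -> 0 < v.
Proof. by rewrite /= in_itv /= andbT. Qed.

Lemma integrable_scale_norm (c : R) :
  mu.-integrable Rpos (EFin \o (fun v => c * `|a v|)).
Proof.
apply: (eq_integrable mRpos _ _ _ (integrableZl mRpos c (integrable_norm ia))).
by move=> v _ /=; rewrite EFinM.
Qed.

Lemma integrable_mul_bounded (h : R -> R) (C : R) : measurable_fun setT h ->
  (forall v, Rpos v -> `|h v| <= C) ->
  mu.-integrable Rpos (EFin \o (fun v => a v * h v)).
Proof.
move=> mh hC; apply: (le_integrable mRpos _ _ (integrable_scale_norm C)).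
- apply/measurable_EFinP/measurable_funM; last exact: measurable_funTS.
  by apply/measurable_EFinP; exact: (measurable_int mu ia).
- move=> v Rv /=; rewrite lee_fin; apply: le_trans (ler_norm _).
  by rewrite normrM mulrC ler_wpM2r // hC.
Qed.

Lemma integrable_kernel (j : nat) (xi : R) : 0 < xi ->
  mu.-integrable Rpos (EFin \o (fun v => a v * exp_kernel j xi v)).
Proof.
move=> xi0; apply: (@integrable_mul_bounded _ (j`!%:R / xi ^+ j)).
  exact: measurable_exp_kernel.
move=> v /Rpos_gt0/ltW v0; rewrite ger0_norm ?exp_kernel_ge0 //.
exact: exp_kernel_le.
Qed.

Definition kernel_transform (j : nat) (xi : R) :=
  \int[mu]_(v in Rpos) (a v * exp_kernel j xi v).

Lemma is_derive_kernel_transform (j : nat) (xi : R) : 0 < xi ->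
  is_derive xi 1 (kernel_transform j) (- kernel_transform j.+1 xi).
Proof.
move=> xi0; set f := fun x v => a v * exp_kernel j x v.
pose I := `]xi / 2, 2 * xi[%classic : set R.
have Ixi : I xi by rewrite /I /= in_itv /=; apply/andP; split; lra.
have Ilb x : I x -> xi / 2 < x by rewrite /I /= in_itv /= => /andP[].
have df (x v : R) : is_derive x 1 (f^~ v) (- (a v * exp_kernel j.+1 x v)).
  apply: is_derive_eq (is_deriveZ (a v) (is_derive_exp_kernel j x v)) _.
  by rewrite /GRing.scale /= mulrN.
have d1f (x v : R) : partial1of2 f x v = - (a v * exp_kernel j.+1 x v).
  by rewrite partial1of2E derive_val.
have intf (x : R) : I x -> mu.-integrable Rpos (EFin \o f x).
  by move=> /Ilb Ix; apply: integrable_kernel; lra.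
have derf (x v : R) : I x -> Rpos v -> derivable (f^~ v) x 1 by [].
pose c := j.+1`!%:R / (xi / 2) ^+ j.+1.
have G0 (v : R) : 0 <= c * `|a v| by rewrite mulr_ge0 ?divr_ge0 ?exprn_ge0 //; lra.
(* the kernel is nonincreasing in xi, hence bounded on I by its value at xi / 2 *)
have G_ub (x v : R) : I x -> Rpos v -> `|partial1of2 f x v| <= c * `|a v|.
  move=> /Ilb/ltW Ix /Rpos_gt0/ltW v0; rewrite d1f normrN normrM mulrC ler_wpM2r //.
  rewrite ger0_norm ?exp_kernel_ge0 //.
  apply: le_trans (exp_kernel_nonincr j.+1 v0 Ix) _.
  by apply: exp_kernel_le => //; lra.
have := differentiation_under_integral mRpos Ixi intf derf G0
  (integrable_scale_norm c) G_ub.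
have /derivableP := derivable_under_integral mRpos Ixi intf derf G0
  (integrable_scale_norm c) G_ub.
rewrite derive1E => dF eF; rewrite eF in dF; apply: is_derive_eq.
rewrite (@eq_Rintegral _ _ _ mu _ (fun v => -1 * (a v * exp_kernel j.+1 xi v)));
  last first.
  by move=> v _; rewrite d1f mulN1r.
by rewrite RintegralZl ?integrable_kernel // mulN1r.
Qed.

Lemma kernel_transform_decay_seq (m j : nat) (w : R ^nat) : (m <= j)%N ->
  (forall n, 1 <= w n) -> w n @[n --> \oo] --> +oo ->
  w n ^+ m * kernel_transform j (w n) @[n --> \oo] --> (0 : R).
Proof.
move=> mj w1 woo; have w0 n : 0 < w n by rewrite (lt_le_trans ltr01).
pose F n v := a v * (w n ^+ m * exp_kernel j (w n) v).
have eF n : w n ^+ m * kernel_transform j (w n) = \int[mu]_(v in Rpos) F n v.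
  rewrite -RintegralZl ?integrable_kernel //.
  by apply: eq_Rintegral => v _; rewrite /F mulrCA.
have F_le n v : Rpos v -> `|F n v| <= j`!%:R * `|a v|.
  move=> /Rpos_gt0/ltW v0; rewrite normrM mulrC ler_wpM2r //.
  by rewrite ger0_norm ?exprn_exp_kernel_ge0 ?exprn_exp_kernel_le_fact
    ?(ltW (w0 n)).
have intF (i : nat) : mu.-integrable Rpos (EFin \o F i).
  apply: (@integrable_mul_bounded _ j`!%:R); last first.
    move=> v /Rpos_gt0/ltW v0.
    by rewrite ger0_norm ?exprn_exp_kernel_ge0 ?exprn_exp_kernel_le_fact
      ?(ltW (w0 i)).
  by apply: measurable_funM => //; exact: measurable_exp_kernel.
have F_cvg v : Rpos v -> F n v @[n --> \oo] --> (0 : R).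
  move=> /Rpos_gt0 v0; rewrite -(mulr0 (a v)); apply: cvgM; first exact: cvg_cst.
  exact: (cvg_comp _ _ woo (exprn_exp_kernel_cvg0 _ _ _ mj v0)).
have F_ae_cvg :
    {ae mu, forall v, Rpos v -> (F n v)%:E @[n --> \oo] --> (0 : \bar R)}.
  by apply: aeW => v Rv; apply: cvg_EFin; [exact: nearW | exact: F_cvg].
have F_ae_le :
    {ae mu, forall v n, Rpos v -> (`|(F n v)%:E| <= (j`!%:R * `|a v|)%:E)%E}.
  by apply: aeW => v n Rv; rewrite lee_fin; exact: F_le.
have [_ _] := dominated_convergence mRpos (fun n => measurable_int mu (intF n))
  (measurable_cst 0%E) F_ae_cvg (integrable_scale_norm j`!%:R) F_ae_le.
rewrite integral0 => /fine_cvg; apply: cvg_trans; apply: near_eq_cvg.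
by apply: nearW => n /=; rewrite eF.
Qed.

Lemma kernel_transform_decay (m j : nat) : (m <= j)%N ->
  xi ^+ m * kernel_transform j xi @[xi --> +oo] --> (0 : R).
Proof.
move=> mj; apply/cvg_pinftyP => u uoo.
pose w n := Num.max (u n) 1.
have w1 n : 1 <= w n by rewrite le_max lexx orbT.
have woo : w n @[n --> \oo] --> +oo.
  by apply: ger_cvgy uoo; apply: nearW => n; rewrite le_max lexx.
apply: (cvg_trans _ (kernel_transform_decay_seq _ _ _ mj w1 woo)).
apply: near_eq_cvg.
by move/cvgryPgt : uoo => /(_ 1); apply: filterS => n /ltW un1; rewrite /w max_l.
Qed.

Lemma Rintegral_sum (I : Type) (s : seq I) (f : I -> R -> R) :
  (forall i, mu.-integrable Rpos (EFin \o f i)) ->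
  \int[mu]_(v in Rpos) (\sum_(i <- s) f i v)
    = \sum_(i <- s) \int[mu]_(v in Rpos) f i v.
Proof.
move=> fi; rewrite sum_fine => [|i _]; last first.
  exact: (@integrable_fin_num _ _ _ mu _ mRpos _ (fi i)).
rewrite -(integral_sum mRpos fi s xpredT); congr fine.
by apply: eq_integral => v _; rewrite sumEFin.
Qed.

Definition term (t : R * nat * nat) (xi : R) :=
  t.1.1 * xi ^+ t.1.2 * kernel_transform t.2 xi.

Definition eval_terms (s : seq (R * nat * nat)) (xi : R) := \sum_(t <- s) term t xi.

Definition derive_term (t : R * nat * nat) : seq (R * nat * nat) :=
  [:: (t.1.1 * t.1.2%:R, t.1.2.-1, t.2); (- t.1.1, t.1.2, t.2.+1)].

Definition derive_terms (s : seq (R * nat * nat)) := flatten (map derive_term s).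

Definition terms_deg_le (d : nat) (s : seq (R * nat * nat)) :=
  all (fun t => (t.1.2 <= t.2 + d)%N) s.

Lemma terms_deg_leW (d d' : nat) s :
  (d <= d')%N -> terms_deg_le d s -> terms_deg_le d' s.
Proof.
by move=> dd' /allP sd; apply/allP => t /sd/leq_trans; apply; rewrite leq_add2l.
Qed.

Lemma derive_terms_deg_le s : terms_deg_le 1 s -> terms_deg_le 0 (derive_terms s).
Proof.
elim: s => [//|[[c m] j] s IH /andP[/= mj /IH]] /= ->.
by rewrite !addn0 andbT -addn1 mj andbT; case: m mj => // m; rewrite addn1.
Qed.

Lemma is_derive_term (t : R * nat * nat) (xi : R) : 0 < xi ->
  is_derive xi 1 (term t) (eval_terms (derive_term t) xi).
Proof.
case: t => [[c m] j] xi0.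
have -> : term (c, m, j) = (c \*: (@id R ^+ m)) * kernel_transform j.
  by apply/funext => x; rewrite /term /= exprfctE.
have dM := is_deriveM (is_deriveZ c (is_deriveX m (@is_derive_id _ _ xi 1)))
  (is_derive_kernel_transform j xi xi0).
apply: is_derive_eq.
rewrite /eval_terms /derive_term !big_cons big_nil addr0 /term /=.
rewrite exprfctE /GRing.scale /=.
set p := xi ^+ m; set q := xi ^+ m.-1.
set h1 := kernel_transform j xi; set h2 := kernel_transform j.+1 xi.
ring.
Qed.

Lemma is_derive_eval_terms (s : seq (R * nat * nat)) (xi : R) : 0 < xi ->
  is_derive xi 1 (eval_terms s) (eval_terms (derive_terms s) xi).
Proof.
move=> xi0; elim: s => [|t s IH].
  have -> : eval_terms [::] = cst 0 by apply/funext => x; rewrite /eval_terms big_nil.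
  by apply: is_derive_eq.
have -> : eval_terms (t :: s) = term t + eval_terms s.
  by apply/funext => x; rewrite /eval_terms big_cons.
have -> : derive_terms (t :: s) = derive_term t ++ derive_terms s by [].
have dD := is_deriveD (is_derive_term t xi xi0) IH.
by apply: is_derive_eq; rewrite /eval_terms big_cat.
Qed.

Lemma eval_terms_cvg0 s : terms_deg_le 0 s ->
  eval_terms s xi @[xi --> +oo] --> (0 : R).
Proof.
elim: s => [_|[[c m] j] s IH /andP[mj /IH s0]].
  have -> : eval_terms [::] = cst 0 by apply/funext => x; rewrite /eval_terms big_nil.
  exact: cvg_cst.
have -> : eval_terms ((c, m, j) :: s) = term (c, m, j) + eval_terms s.
  by apply/funext => x; rewrite /eval_terms big_cons.
rewrite -[0 : R]addr0; apply: cvgD s0; rewrite addn0 /= in mj.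
have := cvgM (cvg_cst c) (kernel_transform_decay _ _ mj); rewrite mulr0 => cm.
apply: (cvg_trans _ (cm _ _)); apply: near_eq_cvg.
by apply: nearW => x /=; rewrite /term mulrA.
Qed.

Lemma gamma_ak_eval_terms (k : nat) : exists s, terms_deg_le 1 s /\
  forall xi, 0 < xi -> gamma_ak a k xi = eval_terms s xi.
Proof.
pose r := index_iota 0 k.+1; pose ps := [seq (i1, i2) | i1 <- r, i2 <- r].
pose c (p : nat * nat) : R := laguerre_coef k p.1 * laguerre_coef k p.2.
exists [seq (2 * c p, (p.1 + p.2).+1, (p.1 + p.2)%N) | p <- ps].
split; first by apply/allP => t /mapP[p _ ->]; rewrite /= addn1.
move=> xi xi0; rewrite /gamma_ak /eval_terms big_map.
under eq_Rintegral do rewrite laguerre_fun_sqr mulr_sumr.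
rewrite Rintegral_sum => [|p]; last first.
  apply: (eq_integrable mRpos _ _ _ (integrableZl mRpos (c p * xi ^+ (p.1 + p.2))
    (integrable_kernel (p.1 + p.2) xi xi0))) => v _ /=.
  by rewrite -EFinM mulrCA mulrA.
rewrite mulr_sumr; apply: eq_bigr => p _.
rewrite (@eq_Rintegral _ _ _ mu _
    (fun v => c p * xi ^+ (p.1 + p.2) * (a v * exp_kernel (p.1 + p.2) xi v))).
  rewrite RintegralZl ?integrable_kernel // /term /kernel_transform /= exprS /c.
  set I := Rintegral _ _ _.
  set c1 := laguerre_coef k p.1; set c2 := laguerre_coef k p.2.
  ring.
by move=> v _; rewrite mulrCA mulrA.
Qed.

Lemma is_derive_eq_eval_terms (f : R -> R) s (xi : R) : 0 < xi ->
  (forall y, 0 < y -> f y = eval_terms s y) ->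
  is_derive xi 1 f (eval_terms (derive_terms s) xi).
Proof.
move=> xi0 fs; apply: near_eq_is_derive (is_derive_eval_terms s xi xi0).
by near=> y; rewrite fs //; near: y; exact: lt_nbhsr.
Unshelve. all: by end_near.
Qed.

Lemma derive1n_gamma_ak_eval_terms (k n : nat) : exists s,
  terms_deg_le (n == 0)%N s /\
  forall xi, 0 < xi -> derive1n n (gamma_ak a k) xi = eval_terms s xi.
Proof.
elim: n => [|n [s [sn e]]]; first exact: gamma_ak_eval_terms.
exists (derive_terms s); split.
  by apply/derive_terms_deg_le/(terms_deg_leW _ 1 s _ sn); case: (n == 0)%N.
move=> xi xi0; rewrite derive1nS derive1E.
by have d := is_derive_eq_eval_terms _ _ _ xi0 e; rewrite derive_val.
Qed.

End kernel_transform.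

Theorem mainTheorem6 (R : realType) (k : nat) (a : R -> R) :
  (@lebesgue_measure R).-integrable `]0, +oo[%classic (EFin \o a) ->
  (exists M : R, {ae @lebesgue_measure R, forall xi : R,
      xi \in `]0, +oo[%classic -> `|gamma_ak a k xi| <= M}) ->
  forall n : nat, (0 < n)%N ->
    (forall xi : R, 0 < xi -> derivable (derive1n n.-1 (gamma_ak a k)) xi 1) /\
    (derive1n n (gamma_ak a k) xi @[xi --> +oo] --> (0 : R)).
Proof.
move=> ia _ n n0; split.
  move=> xi xi0; have [s [_ e]] := derive1n_gamma_ak_eval_terms a ia k n.-1.
  by case: (is_derive_eq_eval_terms a ia _ _ _ xi0 e).
have [s [sn e]] := derive1n_gamma_ak_eval_terms a ia k n.
rewrite gtn_eqF // in sn.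
apply: (cvg_trans _ (eval_terms_cvg0 a ia _ sn)); apply: near_eq_cvg.
by near=> y; rewrite e //; near: y; exact: nbhs_pinfty_gt.
Unshelve. all: by end_near.
Qed.
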